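(* Let $\zeta_1\in\mathbb{C}_+$, $\bar\zeta_1\in\mathbb{C}_-$ and $\omega_1,\bar\omega_1\in\{1,-1\}$. Then: (a) the function $$q(x,t)=2i(\bar\zeta_1-\zeta_1)\frac{\bar\omega_1e^{-2i\bar\zeta_1x-4i\bar\zeta_1^2t}}{1+\omega_1\bar\omega_1e^{-2i(\bar\zeta_1-\zeta_1)x-4i(\bar\zeta_1^2-\zeta_1^2)t}}$$ satisfies the reverse-space-time NLS equation $iq_t(x,t)+q_{xx}(x,t)+2q^2(x,t)q(-x,-t)=0$ wherever the denominator is nonzero; (b) with $V=-2\,\mathrm{Im}(\bar\zeta_1^2-\zeta_1^2)/\mathrm{Im}(\bar\zeta_1-\zeta_1)$, $\beta=2V\,\mathrm{Im}(\bar\zeta_1)+4\,\mathrm{Im}(\bar\zeta_1^2)$ and $\gamma=-2V\,\mathrm{Re}(\bar\zeta_1-\zeta_1)-4\,\mathrm{Re}(\bar\zeta_1^2-\zeta_1^2)$, one has along the line $x=Vt$ $$|q(Vt,t)|=\frac{2|\bar\zeta_1-\zeta_1|\,e^{\beta t}}{\left|1+\omega_1\bar\omega_1e^{i\gamma t}\right|},$$ and $\gamma=4|\zeta_1-\bar\zeta_1|^2\,\mathrm{Im}(\zeta_1+\bar\zeta_1)/\mathrm{Im}(\bar\zeta_1-\zeta_1)$. In particular, if $\mathrm{Im}(\zeta_1+\bar\zeta_1)\neq0$ then $q$ becomes singular (its denominator vanishes) along $x=Vt$ periodically in $t$ with period $2\pi/|\gamma|$.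
   Context: $\mathbb{C}_\pm$ denote the open upper/lower half planes; $\mathrm{Re},\mathrm{Im}$ denote real and imaginary parts. *)

From Stdlib Require Import Reals Lra ZArith.
Open Scope R_scope.

Record Cx := mkC { Re : R ; Im : R }.

Definition RtoC (a : R) : Cx := mkC a 0.
Definition Ci : Cx := mkC 0 1.
Definition Cadd (z w : Cx) : Cx := mkC (Re z + Re w) (Im z + Im w).
Definition Copp (z : Cx) : Cx := mkC (- Re z) (- Im z).
Definition Csub (z w : Cx) : Cx := Cadd z (Copp w).
Definition Cmul (z w : Cx) : Cx :=
  mkC (Re z * Re w - Im z * Im w) (Re z * Im w + Im z * Re w).
Definition Cinv (z : Cx) : Cx :=
  mkC (Re z / (Re z ^ 2 + Im z ^ 2)) (- Im z / (Re z ^ 2 + Im z ^ 2)).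
Definition Cdiv (z w : Cx) : Cx := Cmul z (Cinv w).
Definition Cexp (z : Cx) : Cx := mkC (exp (Re z) * cos (Im z)) (exp (Re z) * sin (Im z)).
Definition Cnorm (z : Cx) : R := sqrt (Re z ^ 2 + Im z ^ 2).

Definition Cderiv (f : R -> Cx) (y : R) (l : Cx) : Prop :=
  derivable_pt_lim (fun s => Re (f s)) y (Re l) /\
  derivable_pt_lim (fun s => Im (f s)) y (Im l).

Definition den (z zb : Cx) (w wb : R) (x t : R) : Cx :=
  Cadd (RtoC 1)
    (Cmul (RtoC (w * wb))
       (Cexp (Csub (Cmul (RtoC (-2)) (Cmul Ci (Cmul (Csub zb z) (RtoC x))))
                   (Cmul (RtoC 4) (Cmul Ci (Cmul (Csub (Cmul zb zb) (Cmul z z)) (RtoC t))))))).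

Definition qsol (z zb : Cx) (w wb : R) (x t : R) : Cx :=
  Cdiv
    (Cmul (Cmul (RtoC 2) (Cmul Ci (Csub zb z)))
       (Cmul (RtoC wb)
          (Cexp (Csub (Cmul (RtoC (-2)) (Cmul Ci (Cmul zb (RtoC x))))
                      (Cmul (RtoC 4) (Cmul Ci (Cmul (Cmul zb zb) (RtoC t))))))))
    (den z zb w wb x t).

From Stdlib Require Import Reals ZArith Lra Field FunctionalExtensionality.
Open Scope R_scope.

(* Write q = K e / (1 + C g) with e = exp(theta1), g = exp(theta2), where theta1, theta2 are
   affine in (x, t), C = w wb and K = 2i (zb - z) wb.  Every derivative of q is again a rational
   function of e and g, and q(-x, -t) is obtained by replacing e, g with 1/e, 1/g; since C^2 = 1,
   1 + C/g = C (1 + C g) / g, so all three terms of the NLS residual share the denominator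
   (1 + C g)^3.  The dispersion relations of theta1 and theta2 then reduce the residual to a
   multiple of K^2 - (2i (zb - z))^2, which vanishes because wb^2 = 1.
   The velocity V kills the real part of theta2 on the line x = V t, so there the denominator is
   1 + C exp(i gamma t), whose zeros form a lattice of step 2 pi / |gamma|. *)

Lemma Cx_ext (z w : Cx) : Re z = Re w -> Im z = Im w -> z = w.
Proof. destruct z, w; simpl; intros; subst; reflexivity. Qed.

Lemma Cx_ring_theory : ring_theory (RtoC 0) (RtoC 1) Cadd Cmul Csub Copp (@eq Cx).
Proof. constructor; intros; apply Cx_ext; simpl; ring. Qed.

Lemma Cnorm2_neq0 (z : Cx) : z <> RtoC 0 -> Re z ^ 2 + Im z ^ 2 <> 0.
Proof. intros Hz E; apply Hz, Cx_ext; simpl; nra. Qed.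

Lemma Cx_field_theory :
  field_theory (RtoC 0) (RtoC 1) Cadd Cmul Csub Copp Cdiv Cinv (@eq Cx).
Proof.
  constructor.
  - exact Cx_ring_theory.
  - intro H; injection H; lra.
  - reflexivity.
  - intros z Hz; apply Cnorm2_neq0 in Hz; apply Cx_ext; simpl; field; simpl in Hz; lra.
Qed.

Add Field Cx_field : Cx_field_theory.

Lemma RtoC_opp (r : R) : RtoC (- r) = Copp (RtoC r).
Proof. apply Cx_ext; simpl; lra. Qed.

Lemma Cmul_neq0 (u v : Cx) : u <> RtoC 0 -> v <> RtoC 0 -> Cmul u v <> RtoC 0.
Proof.
  intros Hu Hv E; apply Hv.
  transitivity (Cmul (Cinv u) (Cmul u v)); [field; exact Hu | rewrite E; ring].
Qed.

(* [ring] and [field] know no numerals other than [RtoC 0] and [RtoC 1]. *)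
Lemma RtoC_2 : RtoC 2 = Cadd (RtoC 1) (RtoC 1).
Proof. apply Cx_ext; simpl; lra. Qed.

Lemma Cexp_neq0 (u : Cx) : Cexp u <> RtoC 0.
Proof.
  intro E; injection E; intros Hs Hc.
  pose proof (exp_pos (Re u)); apply (cos_sin_0 (Im u)); split.
  - apply (Rmult_eq_reg_l (exp (Re u))); lra.
  - apply (Rmult_eq_reg_l (exp (Re u))); lra.
Qed.

Lemma Cexp_opp (u : Cx) : Cexp (Copp u) = Cinv (Cexp u).
Proof.
  assert (Hinv : Cmul (Cexp (Copp u)) (Cexp u) = RtoC 1).
  { pose proof (sin2_cos2 (Im u)) as Hsc; unfold Rsqr in Hsc.
    assert (He : exp (- Re u) * exp (Re u) = 1)
      by (rewrite <- exp_plus, Rplus_opp_l; apply exp_0).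
    apply Cx_ext; simpl; rewrite cos_neg, sin_neg.
    - transitivity (exp (- Re u) * exp (Re u) *
                      (sin (Im u) * sin (Im u) + cos (Im u) * cos (Im u)));
        [ring | rewrite He, Hsc; ring].
    - ring. }
  pose proof (Cexp_neq0 u).
  transitivity (Cmul (Cmul (Cexp (Copp u)) (Cexp u)) (Cinv (Cexp u))); [field; auto|].
  rewrite Hinv; ring.
Qed.

Lemma Cexp_i (r : R) : Cexp (Cmul Ci (RtoC r)) = mkC (cos r) (sin r).
Proof.
  replace (Cmul Ci (RtoC r)) with (mkC 0 r) by (apply Cx_ext; simpl; ring).
  unfold Cexp; simpl; rewrite exp_0; apply Cx_ext; simpl; ring.
Qed.

Lemma Cnorm_mul (u v : Cx) : Cnorm (Cmul u v) = Cnorm u * Cnorm v.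
Proof. unfold Cnorm; rewrite <- sqrt_mult by nra; f_equal; simpl; ring. Qed.

Lemma Cnorm_inv (v : Cx) : v <> RtoC 0 -> Cnorm (Cinv v) = / Cnorm v.
Proof.
  intro Hv; pose proof (Cnorm2_neq0 _ Hv) as Hn; unfold Cnorm; rewrite <- sqrt_inv.
  f_equal; simpl; field; simpl in Hn; lra.
Qed.

Lemma Cnorm_exp (u : Cx) : Cnorm (Cexp u) = exp (Re u).
Proof.
  pose proof (sin2_cos2 (Im u)) as Hsc; unfold Rsqr in Hsc; unfold Cnorm, Cexp; cbn [Re Im].
  replace ((exp (Re u) * cos (Im u)) ^ 2 + (exp (Re u) * sin (Im u)) ^ 2)
    with (exp (Re u) ^ 2) by (rewrite <- (Rmult_1_r (exp (Re u) ^ 2)), <- Hsc; ring).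
  apply sqrt_pow2, Rlt_le, exp_pos.
Qed.

Lemma Cnorm_RtoC (r : R) : Cnorm (RtoC r) = Rabs r.
Proof.
  unfold Cnorm; cbn [Re Im RtoC]; rewrite <- sqrt_Rsqr_abs; f_equal; unfold Rsqr; ring.
Qed.

Lemma Cnorm_i : Cnorm Ci = 1.
Proof. unfold Cnorm; cbn [Re Im Ci]; replace (0 ^ 2 + 1 ^ 2) with 1 by ring; apply sqrt_1. Qed.

Lemma derivable_pt_lim_value (f : R -> R) (x l l' : R) :
  derivable_pt_lim f x l -> l = l' -> derivable_pt_lim f x l'.
Proof. intros Hf <-; exact Hf. Qed.

Lemma Cderiv_value (f : R -> Cx) (x : R) (l l' : Cx) :
  Cderiv f x l -> l = l' -> Cderiv f x l'.
Proof. intros Hf <-; exact Hf. Qed.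

Lemma Cderiv_ext (f g : R -> Cx) (x : R) (l : Cx) :
  (forall s, f s = g s) -> Cderiv f x l -> Cderiv g x l.
Proof. intros Hfg; replace g with f by (apply functional_extensionality; exact Hfg); auto. Qed.

Lemma Cderiv_const (c : Cx) (x : R) : Cderiv (fun _ => c) x (RtoC 0).
Proof. split; apply derivable_pt_lim_const. Qed.

Lemma Cderiv_RtoC (x : R) : Cderiv RtoC x (RtoC 1).
Proof. split; [apply derivable_pt_lim_id | apply derivable_pt_lim_const]. Qed.

Lemma Cderiv_add (f g : R -> Cx) (x : R) (a b : Cx) :
  Cderiv f x a -> Cderiv g x b -> Cderiv (fun s => Cadd (f s) (g s)) x (Cadd a b).
Proof.
  intros [Hfr Hfi] [Hgr Hgi]; split; simpl.
  - exact (derivable_pt_lim_plus _ _ _ _ _ Hfr Hgr).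
  - exact (derivable_pt_lim_plus _ _ _ _ _ Hfi Hgi).
Qed.

Lemma Cderiv_mul (f g : R -> Cx) (x : R) (a b : Cx) :
  Cderiv f x a -> Cderiv g x b ->
  Cderiv (fun s => Cmul (f s) (g s)) x (Cadd (Cmul a (g x)) (Cmul (f x) b)).
Proof.
  intros [Hfr Hfi] [Hgr Hgi]; split; simpl.
  - eapply derivable_pt_lim_value.
    + exact (derivable_pt_lim_minus _ _ _ _ _
               (derivable_pt_lim_mult _ _ _ _ _ Hfr Hgr) (derivable_pt_lim_mult _ _ _ _ _ Hfi Hgi)).
    + cbv beta; ring.
  - eapply derivable_pt_lim_value.
    + exact (derivable_pt_lim_plus _ _ _ _ _
               (derivable_pt_lim_mult _ _ _ _ _ Hfr Hgi) (derivable_pt_lim_mult _ _ _ _ _ Hfi Hgr)).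
    + cbv beta; ring.
Qed.

Lemma Cderiv_exp (f : R -> Cx) (x : R) (l : Cx) :
  Cderiv f x l -> Cderiv (fun s => Cexp (f s)) x (Cmul (Cexp (f x)) l).
Proof.
  intros [Hr Hi].
  pose proof (derivable_pt_lim_comp _ _ _ _ _ Hr (derivable_pt_lim_exp (Re (f x)))) as He.
  pose proof (derivable_pt_lim_comp _ _ _ _ _ Hi (derivable_pt_lim_cos (Im (f x)))) as Hc.
  pose proof (derivable_pt_lim_comp _ _ _ _ _ Hi (derivable_pt_lim_sin (Im (f x)))) as Hs.
  split; simpl.
  - eapply derivable_pt_lim_value;
      [exact (derivable_pt_lim_mult _ _ _ _ _ He Hc) | unfold comp; ring].
  - eapply derivable_pt_lim_value;
      [exact (derivable_pt_lim_mult _ _ _ _ _ He Hs) | unfold comp; ring].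
Qed.

Lemma Cderiv_inv (f : R -> Cx) (x : R) (l : Cx) :
  Cderiv f x l -> f x <> RtoC 0 ->
  Cderiv (fun s => Cinv (f s)) x (Copp (Cmul l (Cmul (Cinv (f x)) (Cinv (f x))))).
Proof.
  intros [Hr Hi] Hnz; pose proof (Cnorm2_neq0 _ Hnz) as Hn.
  assert (Hsq : derivable_pt_lim (fun s => Re (f s) ^ 2 + Im (f s) ^ 2) x
                  (2 * Re (f x) * Re l + 2 * Im (f x) * Im l)).
  { eapply derivable_pt_lim_value.
    - exact (derivable_pt_lim_plus _ _ _ _ _
               (derivable_pt_lim_mult _ _ _ _ _ Hr
                  (derivable_pt_lim_mult _ _ _ _ _ Hr (derivable_pt_lim_const 1 x)))
               (derivable_pt_lim_mult _ _ _ _ _ Hi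
                  (derivable_pt_lim_mult _ _ _ _ _ Hi (derivable_pt_lim_const 1 x)))).
    - unfold mult_fct, fct_cte; ring. }
  split; simpl.
  - eapply derivable_pt_lim_value; [exact (derivable_pt_lim_div _ _ _ _ _ Hr Hsq Hn) |].
    unfold Rsqr; cbv beta; field; contradict Hn; nra.
  - eapply derivable_pt_lim_value;
      [exact (derivable_pt_lim_div _ _ _ _ _ (derivable_pt_lim_opp _ _ _ Hi) Hsq Hn) |].
    unfold Rsqr, opp_fct; cbv beta; field; contradict Hn; nra.
Qed.

Lemma Cderiv_affine (u a : Cx) (x : R) : Cderiv (fun s => Cadd u (Cmul a (RtoC s))) x a.
Proof.
  eapply Cderiv_value;
    [exact (Cderiv_add _ _ _ _ _ (Cderiv_const u x)
              (Cderiv_mul _ _ _ _ _ (Cderiv_const a x) (Cderiv_RtoC x))) | cbv beta; ring].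
Qed.

(* If e' = a e and g' = b g, then [sol_d1 K C a b e g] and [sol_d2 K C a b e g] are the first
   two derivatives of [sol K C e g] = K e / (1 + C g). *)
Definition sol_den (C g : Cx) : Cx := Cadd (RtoC 1) (Cmul C g).

Definition sol (K C e g : Cx) : Cx := Cdiv (Cmul K e) (sol_den C g).

Definition sol_d1 (K C a b e g : Cx) : Cx :=
  Cdiv (Cmul K (Cmul e (Cadd a (Cmul (Csub a b) (Cmul C g)))))
       (Cmul (sol_den C g) (sol_den C g)).

Definition sol_d2 (K C a b e g : Cx) : Cx :=
  Cdiv (Cmul K (Cmul e
          (Cadd (Cmul a a)
             (Cadd (Cmul (Csub (Cmul (RtoC 2) (Cmul a (Csub a b))) (Cmul b b)) (Cmul C g))
                   (Cmul (Cmul (Csub a b) (Csub a b)) (Cmul (Cmul C g) (Cmul C g)))))))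
       (Cmul (sol_den C g) (Cmul (sol_den C g) (sol_den C g))).

Section SolDerivatives.

Variables (K C a b : Cx) (E G : R -> Cx) (s : R).
Hypotheses (dE : Cderiv E s (Cmul a (E s))) (dG : Cderiv G s (Cmul b (G s)))
           (hD : sol_den C (G s) <> RtoC 0).

Lemma Cderiv_sol_den : Cderiv (fun y => sol_den C (G y)) s (Cmul C (Cmul b (G s))).
Proof.
  eapply Cderiv_value;
    [exact (Cderiv_add _ _ _ _ _ (Cderiv_const _ s) (Cderiv_mul _ _ _ _ _ (Cderiv_const C s) dG))
    | cbv beta; ring].
Qed.

Lemma Cderiv_sol : Cderiv (fun y => sol K C (E y) (G y)) s (sol_d1 K C a b (E s) (G s)).
Proof.
  eapply Cderiv_value.
  - exact (Cderiv_mul _ _ _ _ _ (Cderiv_mul _ _ _ _ _ (Cderiv_const K s) dE)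
                                 (Cderiv_inv _ _ _ Cderiv_sol_den hD)).
  - unfold sol_d1, sol_den in *; cbv beta; field; exact hD.
Qed.

Lemma Cderiv_sol_d1 :
  Cderiv (fun y => sol_d1 K C a b (E y) (G y)) s (sol_d2 K C a b (E s) (G s)).
Proof.
  eapply Cderiv_value.
  - exact (Cderiv_mul _ _ _ _ _
             (Cderiv_mul _ _ _ _ _ (Cderiv_const K s)
                (Cderiv_mul _ _ _ _ _ dE
                   (Cderiv_add _ _ _ _ _ (Cderiv_const a s)
                      (Cderiv_mul _ _ _ _ _ (Cderiv_const _ s)
                         (Cderiv_mul _ _ _ _ _ (Cderiv_const C s) dG)))))
             (Cderiv_inv _ _ _ (Cderiv_mul _ _ _ _ _ Cderiv_sol_den Cderiv_sol_den)
                (Cmul_neq0 _ _ hD hD))).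
  - unfold sol_d2, sol_den in *; cbv beta; rewrite RtoC_2; field; exact hD.
Qed.

End SolDerivatives.

Lemma sol_inv (K C e g : Cx) :
  Cmul C C = RtoC 1 -> e <> RtoC 0 -> g <> RtoC 0 -> sol_den C g <> RtoC 0 ->
  sol K C (Cinv e) (Cinv g) = Cdiv (Cmul K (Cmul C g)) (Cmul e (sol_den C g)).
Proof.
  intros HC He Hg HD.
  assert (HgC : Cadd g C = Cmul C (sol_den C g)).
  { unfold sol_den; transitivity (Cadd (Cmul (Cmul C C) g) C); [rewrite HC |]; ring. }
  assert (HC0 : C <> RtoC 0) by (intro E; rewrite E in HC; injection HC; lra).
  assert (HgC0 : Cadd g C <> RtoC 0) by (rewrite HgC; exact (Cmul_neq0 _ _ HC0 HD)).
  transitivity (Cdiv (Cmul K g) (Cmul e (Cadd g C))).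
  - unfold sol, sol_den; field; auto.
  - rewrite HgC.
    replace (Cmul K g) with (Cmul (Cmul C C) (Cmul K g)) by (rewrite HC; ring).
    field; auto.
Qed.

Lemma sol_nls_identity (K C a b aT bT e g : Cx) :
  Cmul C C = RtoC 1 -> Cmul K K = Cmul b b ->
  Cmul Ci aT = Copp (Cmul a a) ->
  Cmul Ci bT = Csub (Cmul b b) (Cmul (RtoC 2) (Cmul a b)) ->
  e <> RtoC 0 -> g <> RtoC 0 -> sol_den C g <> RtoC 0 ->
  Cadd (Cadd (Cmul Ci (sol_d1 K C aT bT e g)) (sol_d2 K C a b e g))
       (Cmul (RtoC 2) (Cmul (Cmul (sol K C e g) (sol K C e g)) (sol K C (Cinv e) (Cinv g))))
  = RtoC 0.
Proof.
  intros HC HK HaT HbT He Hg HD.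
  assert (Hd1 : Cmul Ci (sol_d1 K C aT bT e g) = sol_d1 K C (Cmul Ci aT) (Cmul Ci bT) e g)
    by (unfold sol_d1; field; exact HD).
  rewrite sol_inv, Hd1, HaT, HbT by auto.
  transitivity (Cmul (Cdiv (Cmul (RtoC 2) (Cmul K (Cmul e (Cmul C g))))
                           (Cmul (sol_den C g) (Cmul (sol_den C g) (sol_den C g))))
                     (Csub (Cmul K K) (Cmul b b))).
  - unfold sol, sol_d1, sol_d2, sol_den in *; rewrite !RtoC_2; field; auto.
  - rewrite HK; ring.
Qed.

Definition phase (v v2 : Cx) (x t : R) : Cx :=
  Csub (Cmul (RtoC (-2)) (Cmul Ci (Cmul v (RtoC x))))
       (Cmul (RtoC 4) (Cmul Ci (Cmul v2 (RtoC t)))).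

Definition phase_dx (v : Cx) : Cx := Cmul (RtoC (-2)) (Cmul Ci v).
Definition phase_dt (v2 : Cx) : Cx := Copp (Cmul (RtoC 4) (Cmul Ci v2)).

Lemma phase_opp (v v2 : Cx) (x t : R) : phase v v2 (- x) (- t) = Copp (phase v v2 x t).
Proof. unfold phase; rewrite !RtoC_opp; ring. Qed.

Lemma phase_split (v v2 : Cx) (x t : R) :
  phase v v2 x t = Cadd (Cmul (phase_dx v) (RtoC x)) (Cmul (phase_dt v2) (RtoC t)).
Proof. unfold phase, phase_dx, phase_dt; ring. Qed.

Lemma Cderiv_exp_phase_x (v v2 : Cx) (x t : R) :
  Cderiv (fun y => Cexp (phase v v2 y t)) x (Cmul (phase_dx v) (Cexp (phase v v2 x t))).
Proof.
  eapply Cderiv_value; [apply Cderiv_exp |].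
  - apply (Cderiv_ext (fun y => Cadd (Cmul (phase_dt v2) (RtoC t)) (Cmul (phase_dx v) (RtoC y)))).
    + intro y; rewrite phase_split; ring.
    + apply Cderiv_affine.
  - cbv beta; ring.
Qed.

Lemma Cderiv_exp_phase_t (v v2 : Cx) (x t : R) :
  Cderiv (fun s => Cexp (phase v v2 x s)) t (Cmul (phase_dt v2) (Cexp (phase v v2 x t))).
Proof.
  eapply Cderiv_value; [apply Cderiv_exp |].
  - apply (Cderiv_ext (fun s => Cadd (Cmul (phase_dx v) (RtoC x)) (Cmul (phase_dt v2) (RtoC s)))).
    + intro s; rewrite phase_split; ring.
    + apply Cderiv_affine.
  - cbv beta; ring.
Qed.

Definition sol_amp (z zb : Cx) (wb : R) : Cx :=
  Cmul (Cmul (RtoC 2) (Cmul Ci (Csub zb z))) (RtoC wb).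

Lemma qsol_eq_sol (z zb : Cx) (w wb x t : R) :
  qsol z zb w wb x t =
  sol (sol_amp z zb wb) (RtoC (w * wb)) (Cexp (phase zb (Cmul zb zb) x t))
      (Cexp (phase (Csub zb z) (Csub (Cmul zb zb) (Cmul z z)) x t)).
Proof. unfold qsol, den, sol, sol_den, sol_amp, phase, Cdiv; ring. Qed.

Lemma sign_mul_self (r : R) : r = 1 \/ r = -1 -> r * r = 1.
Proof. intros [-> | ->]; ring. Qed.

Lemma RtoC_mul_unit (r : R) : r * r = 1 -> Cmul (RtoC r) (RtoC r) = RtoC 1.
Proof. intro Hr; apply Cx_ext; simpl; lra. Qed.

Lemma sol_amp_sq (z zb : Cx) (wb : R) : wb * wb = 1 ->
  Cmul (sol_amp z zb wb) (sol_amp z zb wb) = Cmul (phase_dx (Csub zb z)) (phase_dx (Csub zb z)).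
Proof.
  intro Hwb; unfold sol_amp; set (v := Csub zb z).
  transitivity (Cmul (Cmul (Cmul (RtoC 2) (Cmul Ci v)) (Cmul (RtoC 2) (Cmul Ci v)))
                     (Cmul (RtoC wb) (RtoC wb))); [ring |].
  rewrite RtoC_mul_unit by exact Hwb.
  unfold phase_dx; apply Cx_ext; simpl; ring.
Qed.

Lemma phase_dispersion (v : Cx) :
  Cmul Ci (phase_dt (Cmul v v)) = Copp (Cmul (phase_dx v) (phase_dx v)).
Proof. unfold phase_dx, phase_dt; apply Cx_ext; simpl; ring. Qed.

Lemma phase_dispersion_diff (z zb : Cx) :
  Cmul Ci (phase_dt (Csub (Cmul zb zb) (Cmul z z))) =
  Csub (Cmul (phase_dx (Csub zb z)) (phase_dx (Csub zb z)))
       (Cmul (RtoC 2) (Cmul (phase_dx zb) (phase_dx (Csub zb z)))).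
Proof. unfold phase_dx, phase_dt; apply Cx_ext; simpl; ring. Qed.

Lemma qsol_nls (z zb : Cx) (w wb : R) (hw : w = 1 \/ w = -1) (hwb : wb = 1 \/ wb = -1) :
  exists Qx : R -> R -> Cx,
     (forall x t, den z zb w wb x t <> RtoC 0 ->
        Cderiv (fun y => qsol z zb w wb y t) x (Qx x t)) /\
     (forall x t, den z zb w wb x t <> RtoC 0 ->
        exists qt qxx : Cx,
          Cderiv (fun s => qsol z zb w wb x s) t qt /\
          Cderiv (fun y => Qx y t) x qxx /\
          Cadd (Cadd (Cmul Ci qt) qxx)
               (Cmul (RtoC 2) (Cmul (Cmul (qsol z zb w wb x t) (qsol z zb w wb x t))
                                    (qsol z zb w wb (- x) (- t)))) = RtoC 0).
Proof.
  set (K := sol_amp z zb wb); set (C := RtoC (w * wb)).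
  set (v := Csub zb z); set (v2 := Csub (Cmul zb zb) (Cmul z z)).
  set (E := fun x t => Cexp (phase zb (Cmul zb zb) x t)).
  set (G := fun x t => Cexp (phase v v2 x t)).
  assert (Hq : forall x t, qsol z zb w wb x t = sol K C (E x t) (G x t)) by apply qsol_eq_sol.
  assert (HC : Cmul C C = RtoC 1).
  { apply RtoC_mul_unit; transitivity ((w * w) * (wb * wb)); [ring |].
    rewrite !sign_mul_self by assumption; ring. }
  exists (fun x t => sol_d1 K C (phase_dx zb) (phase_dx v) (E x t) (G x t)); split.
  - intros x t HD.
    apply (Cderiv_ext (fun y => sol K C (E y t) (G y t))); [intro y; symmetry; apply Hq |].
    apply (Cderiv_sol _ _ _ _ (fun y => E y t) (fun y => G y t));
      [apply Cderiv_exp_phase_x | apply Cderiv_exp_phase_x | exact HD].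
  - intros x t HD.
    exists (sol_d1 K C (phase_dt (Cmul zb zb)) (phase_dt v2) (E x t) (G x t)),
           (sol_d2 K C (phase_dx zb) (phase_dx v) (E x t) (G x t)).
    split; [| split].
    + apply (Cderiv_ext (fun s => sol K C (E x s) (G x s))); [intro s; symmetry; apply Hq |].
      apply (Cderiv_sol _ _ _ _ (E x) (G x));
        [apply Cderiv_exp_phase_t | apply Cderiv_exp_phase_t | exact HD].
    + apply (Cderiv_sol_d1 _ _ _ _ (fun y => E y t) (fun y => G y t));
        [apply Cderiv_exp_phase_x | apply Cderiv_exp_phase_x | exact HD].
    + rewrite !Hq; unfold E, G; rewrite !phase_opp, !Cexp_opp.
      apply sol_nls_identity; auto using Cexp_neq0, phase_dispersion.
      * exact (sol_amp_sq z zb wb (sign_mul_self wb hwb)).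
      * exact (phase_dispersion_diff z zb).
Qed.

Lemma cos_eq_1_iff (r : R) : cos r = 1 <-> exists k : Z, r = 2 * IZR k * PI.
Proof.
  assert (Hcos : cos r = 1 - 2 * sin (r / 2) * sin (r / 2))
    by (rewrite <- cos_2a_sin; f_equal; field).
  rewrite Hcos; split.
  - intro H; destruct (sin_eq_0_0 (r / 2)) as [k Hk]; [nra |].
    exists k; lra.
  - intros [k Hk]; rewrite (sin_eq_0_1 (r / 2)); [ring | exists k; lra].
Qed.

Lemma one_add_sign_exp_i_eq0 (c : R) : c = 1 \/ c = -1 ->
  exists r0 : R, forall r : R,
    Cadd (RtoC 1) (Cmul (RtoC c) (Cexp (Cmul Ci (RtoC r)))) = RtoC 0 <->
    exists k : Z, r = r0 + 2 * IZR k * PI.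
Proof.
  intro Hc.
  assert (Hr0 : exists r0, cos r0 = - c /\ sin r0 = 0).
  { destruct Hc as [-> | ->];
      [exists PI; rewrite cos_PI, sin_PI | exists 0; rewrite cos_0, sin_0]; lra. }
  destruct Hr0 as [r0 [Hcos0 Hsin0]]; exists r0; intro r.
  assert (Hshift : cos (r - r0) = - c * cos r) by (rewrite cos_minus, Hcos0, Hsin0; ring).
  assert (Hcc : c * c = 1) by (destruct Hc as [-> | ->]; ring).
  pose proof (sin2_cos2 r) as Hsc; unfold Rsqr in Hsc.
  transitivity (cos (r - r0) = 1).
  - rewrite Cexp_i, Hshift; split.
    + intro H; injection H; simpl; lra.
    + intro H; apply Cx_ext; simpl; [lra |].
      assert (sin r * sin r = 0) by nra; nra.
  - rewrite cos_eq_1_iff; split; intros [k Hk]; exists k; lra.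
Qed.

Lemma scale_lattice (g r0 t : R) : g <> 0 ->
  (exists k : Z, g * t = r0 + 2 * IZR k * PI) <->
  exists k : Z, t = r0 / g + IZR k * (2 * PI / Rabs g).
Proof.
  intro Hg; destruct (Rcase_abs g) as [Hneg | Hpos].
  - rewrite Rabs_left by exact Hneg; split; intros [k Hk]; exists (- k)%Z; rewrite opp_IZR.
    + apply (Rmult_eq_reg_l g); [rewrite Hk; field |]; exact Hg.
    + rewrite Hk; field; exact Hg.
  - rewrite Rabs_right by exact Hpos; split; intros [k Hk]; exists k.
    + apply (Rmult_eq_reg_l g); [rewrite Hk; field |]; exact Hg.
    + rewrite Hk; field; exact Hg.
Qed.

Lemma one_add_sign_exp_i_roots (c g : R) : c = 1 \/ c = -1 -> g <> 0 ->
  exists t0 : R,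
    Cadd (RtoC 1) (Cmul (RtoC c) (Cexp (Cmul Ci (RtoC (g * t0))))) = RtoC 0 /\
    forall t : R, Cadd (RtoC 1) (Cmul (RtoC c) (Cexp (Cmul Ci (RtoC (g * t))))) = RtoC 0 <->
      exists k : Z, t = t0 + IZR k * (2 * PI / Rabs g).
Proof.
  intros Hc Hg; destruct (one_add_sign_exp_i_eq0 c Hc) as [r0 Hr0].
  assert (Hroots : forall t,
    Cadd (RtoC 1) (Cmul (RtoC c) (Cexp (Cmul Ci (RtoC (g * t))))) = RtoC 0 <->
    exists k : Z, t = r0 / g + IZR k * (2 * PI / Rabs g))
    by (intro t; rewrite Hr0; apply scale_lattice, Hg).
  exists (r0 / g); split; [apply Hroots; exists 0%Z; simpl; ring | exact Hroots].
Qed.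

Definition ray_velocity (z zb : Cx) : R :=
  -2 * Im (Csub (Cmul zb zb) (Cmul z z)) / Im (Csub zb z).
Definition ray_growth (z zb : Cx) : R :=
  2 * ray_velocity z zb * Im zb + 4 * Im (Cmul zb zb).
Definition ray_frequency (z zb : Cx) : R :=
  -2 * ray_velocity z zb * Re (Csub zb z) - 4 * Re (Csub (Cmul zb zb) (Cmul z z)).

Section Ray.

Variables (z zb : Cx) (w wb : R).
Hypothesis hIm : Im (Csub zb z) <> 0.

Lemma den_on_ray (t : R) :
  den z zb w wb (ray_velocity z zb * t) t =
  Cadd (RtoC 1) (Cmul (RtoC (w * wb)) (Cexp (Cmul Ci (RtoC (ray_frequency z zb * t))))).
Proof.
  unfold den; do 3 f_equal; apply Cx_ext.
  - unfold ray_velocity; simpl; simpl in hIm; field; exact hIm.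
  - unfold ray_frequency; simpl; ring.
Qed.

Lemma qsol_norm_on_ray (t : R) : wb = 1 \/ wb = -1 ->
  Cadd (RtoC 1) (Cmul (RtoC (w * wb)) (Cexp (Cmul Ci (RtoC (ray_frequency z zb * t))))) <> RtoC 0 ->
  Cnorm (qsol z zb w wb (ray_velocity z zb * t) t) =
  2 * Cnorm (Csub zb z) * exp (ray_growth z zb * t) /
  Cnorm (Cadd (RtoC 1) (Cmul (RtoC (w * wb)) (Cexp (Cmul Ci (RtoC (ray_frequency z zb * t)))))).
Proof.
  rewrite <- den_on_ray; intros Hwb HD.
  assert (Hwb1 : Rabs wb = 1)
    by (destruct Hwb as [-> | ->]; [apply Rabs_R1 | rewrite Rabs_left; lra]).
  unfold qsol at 1, Cdiv.
  rewrite !Cnorm_mul, Cnorm_inv, !Cnorm_RtoC, Cnorm_i, Cnorm_exp, Hwb1 by exact HD.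
  rewrite Rabs_right by lra.
  replace (Re _) with (ray_growth z zb * t) by (unfold ray_growth; simpl; ring).
  unfold Rdiv; ring.
Qed.

Lemma ray_frequency_eq :
  ray_frequency z zb = 4 * Cnorm (Csub z zb) ^ 2 * Im (Cadd z zb) / Im (Csub zb z).
Proof.
  unfold Cnorm; rewrite pow2_sqrt by nra.
  unfold ray_frequency, ray_velocity; simpl; simpl in hIm; field; exact hIm.
Qed.

Lemma ray_frequency_neq0 : Im (Cadd z zb) <> 0 -> ray_frequency z zb <> 0.
Proof.
  intros Hsum Hfreq; apply Hsum.
  assert (Hnorm : 0 < Cnorm (Csub z zb) ^ 2).
  { pose proof (Rsqr_pos_lt _ hIm) as Hsq; unfold Rsqr in Hsq.
    pose proof (pow2_ge_0 (Re (Csub z zb))) as Hre.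
    unfold Cnorm; rewrite pow2_sqrt; cbn [Re Im Csub Cadd Copp] in *; nra. }
  assert (Hprod : 4 * Cnorm (Csub z zb) ^ 2 * Im (Cadd z zb) = 0)
    by (rewrite <- (Rmult_0_l (Im (Csub zb z))), <- Hfreq, ray_frequency_eq; field; exact hIm).
  nra.
Qed.

Lemma den_on_ray_roots : w = 1 \/ w = -1 -> wb = 1 \/ wb = -1 -> Im (Cadd z zb) <> 0 ->
  exists t0 : R,
    den z zb w wb (ray_velocity z zb * t0) t0 = RtoC 0 /\
    forall t : R, den z zb w wb (ray_velocity z zb * t) t = RtoC 0 <->
      exists k : Z, t = t0 + IZR k * (2 * PI / Rabs (ray_frequency z zb)).
Proof.
  intros Hw Hwb Hsum.
  assert (Hsign : w * wb = 1 \/ w * wb = -1)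
    by (destruct Hw as [-> | ->]; destruct Hwb as [-> | ->]; lra).
  destruct (one_add_sign_exp_i_roots _ _ Hsign (ray_frequency_neq0 Hsum)) as [t0 [Ht0 Hroots]].
  exists t0; split; [rewrite den_on_ray; exact Ht0 |].
  intro t; rewrite den_on_ray; apply Hroots.
Qed.

End Ray.

Theorem mainTheorem5 (z zb : Cx) (w wb : R)
  (hz : 0 < Im z) (hzb : Im zb < 0)
  (hw : w = 1 \/ w = -1) (hwb : wb = 1 \/ wb = -1) :
  (exists Qx : R -> R -> Cx,
     (forall x t, den z zb w wb x t <> RtoC 0 ->
        Cderiv (fun y => qsol z zb w wb y t) x (Qx x t)) /\
     (forall x t, den z zb w wb x t <> RtoC 0 ->
        exists qt qxx : Cx,
          Cderiv (fun s => qsol z zb w wb x s) t qt /\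
          Cderiv (fun y => Qx y t) x qxx /\
          Cadd (Cadd (Cmul Ci qt) qxx)
               (Cmul (RtoC 2) (Cmul (Cmul (qsol z zb w wb x t) (qsol z zb w wb x t))
                                    (qsol z zb w wb (- x) (- t)))) = RtoC 0)) /\
  (let V := -2 * Im (Csub (Cmul zb zb) (Cmul z z)) / Im (Csub zb z) in
   let beta := 2 * V * Im zb + 4 * Im (Cmul zb zb) in
   let gamma := -2 * V * Re (Csub zb z) - 4 * Re (Csub (Cmul zb zb) (Cmul z z)) in
   (forall t : R,
      Cadd (RtoC 1) (Cmul (RtoC (w * wb)) (Cexp (Cmul Ci (RtoC (gamma * t))))) <> RtoC 0 ->
      Cnorm (qsol z zb w wb (V * t) t) =
      2 * Cnorm (Csub zb z) * exp (beta * t) /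
      Cnorm (Cadd (RtoC 1) (Cmul (RtoC (w * wb)) (Cexp (Cmul Ci (RtoC (gamma * t))))))) /\
   gamma = 4 * (Cnorm (Csub z zb)) ^ 2 * Im (Cadd z zb) / Im (Csub zb z) /\
   (Im (Cadd z zb) <> 0 ->
      exists t0 : R,
        den z zb w wb (V * t0) t0 = RtoC 0 /\
        forall t : R, den z zb w wb (V * t) t = RtoC 0 <->
          exists k : Z, t = t0 + IZR k * (2 * PI / Rabs gamma))).
Proof.
  assert (hIm : Im (Csub zb z) <> 0) by (simpl; lra).
  split; [exact (qsol_nls z zb w wb hw hwb) |].
  intros V beta gamma; split; [| split].
  - intro t; exact (qsol_norm_on_ray z zb w wb hIm t hwb).
  - exact (ray_frequency_eq z zb hIm).
  - exact (den_on_ray_roots z zb w wb hIm hw hwb).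
Qed.
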